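(* Consider the monoid (algebra in sets) $M$ generated by $a,b,c,d,e,f,g,h,i,j,k,l$ with relations $da=eb$, $fb=hc$, $gb=ic$, $kh=li$, $je=kf=lg$, and the rewriting system $eb\to da$, $hc\to fb$, $gb\to ic$, $kf\to je$, $lg\to je$, $li\to kh$ (whose normal forms form a PBW basis of the linearised algebra). Let $\Pi$ be the poset with elements $A,B,S,U,V,W,X,Z$ and covering relations $A\prec B$ (labelled $a$), $A\prec S$ ($b$), $A\prec U$ ($c$), $B\prec V$ ($d$), $S\prec V$ ($e$), $S\prec W$ ($f$), $S\prec X$ ($g$), $U\prec W$ ($h$), $U\prec X$ ($i$), $V\prec Z$ ($j$), $W\prec Z$ ($k$), $X\prec Z$ ($l$), an interval of a partition poset of $M$; a chain read from bottom to top gives a word in $M$ read from right to left. Then $\Pi$ admits no CL-labelling such that $\Pi$ is CL-shellable and the minimal chains (for the lexicographic order of the CL-labelling) correspond to PBW elements of the algebra, i.e. to normal forms of this rewriting system.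
   Context: For an algebra in sets (monoid) presented by generators $E$ and homogeneous relations, the partition poset $\Pi^{(d)}$ has as elements the elements of weight at most $d$ lying below some element of weight $d$, with $x\le y$ iff $y=zx$ for some $z$; covering edges are labelled by the generator multiplied on the left. A chain-edge labelling of a poset assigns to each pair (maximal chain, covering edge on it) a label in a poset $\Lambda$, such that maximal chains agreeing on their bottom edges get the same labels there. It is a CL-labelling if in each rooted interval $[x,y]_r$ (interval $[x,y]$ together with a maximal chain $r$ of $[\hat0,x]$) there is a unique maximal chain with strictly increasing labels, and it lexicographically precedes all other maximal chains of the interval; a poset with a CL-labelling is CL-shellable. *)

From HB Require Import structures.
From mathcomp Require Import all_boot all_order.
Set Implicit Arguments. Unset Strict Implicit. Unset Printing Implicit Defensive.
Import Order.TTheory.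

Inductive gen := ga | gb | gc | gd | ge | gf | gg | gh | gi | gj | gk | gl.

Definition nat_of_gen (x : gen) : nat :=
  match x with ga => 0 | gb => 1 | gc => 2 | gd => 3 | ge => 4 | gf => 5
  | gg => 6 | gh => 7 | gi => 8 | gj => 9 | gk => 10 | gl => 11 end.
Definition gen_of_nat (n : nat) : option gen :=
  match n with 0 => Some ga | 1 => Some gb | 2 => Some gc | 3 => Some gd
  | 4 => Some ge | 5 => Some gf | 6 => Some gg | 7 => Some gh | 8 => Some gi
  | 9 => Some gj | 10 => Some gk | 11 => Some gl | _ => None end.
Lemma gen_natK : pcancel nat_of_gen gen_of_nat. Proof. by case. Qed.
HB.instance Definition _ := Equality.copy gen (pcan_type gen_natK).

(* Words of M are written left to right as in the paper (e.g. [:: ge; gb] = eb). *)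
Definition word := seq gen.

Definition rules : seq (word * word) :=
  [:: ([:: ge; gb], [:: gd; ga]); ([:: gh; gc], [:: gf; gb]);
      ([:: gg; gb], [:: gi; gc]); ([:: gk; gf], [:: gj; ge]);
      ([:: gl; gg], [:: gj; ge]); ([:: gl; gi], [:: gk; gh])].

Definition normal_form (w : word) : bool :=
  all (fun r : word * word => ~~ infix r.1 w) rules.

Inductive pel := pA | pB | pS | pU | pV | pW | pX | pZ.
Definition nat_of_pel (x : pel) : nat :=
  match x with pA => 0 | pB => 1 | pS => 2 | pU => 3 | pV => 4 | pW => 5
  | pX => 6 | pZ => 7 end.
Definition pel_of_nat (n : nat) : option pel :=
  match n with 0 => Some pA | 1 => Some pB | 2 => Some pS | 3 => Some pU
  | 4 => Some pV | 5 => Some pW | 6 => Some pX | 7 => Some pZ | _ => None end.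
Lemma pel_natK : pcancel nat_of_pel pel_of_nat. Proof. by case. Qed.
HB.instance Definition _ := Equality.copy pel (pcan_type pel_natK).

(* Covering relations of Pi with their labels (the generator multiplied on the left). *)
Definition edge (x y : pel) : option gen :=
  match x, y with
  | pA, pB => Some ga | pA, pS => Some gb | pA, pU => Some gc
  | pB, pV => Some gd | pS, pV => Some ge | pS, pW => Some gf
  | pS, pX => Some gg | pU, pW => Some gh | pU, pX => Some gi
  | pV, pZ => Some gj | pW, pZ => Some gk | pX, pZ => Some gl
  | _, _ => None end.

Definition covers (x y : pel) : bool := edge x y != None.

(* A maximal chain of the interval [x,y] of the finite poset Pi is a saturated
   chain x = x0 < x1 < ... < xn = y; we represent it by its tail [:: x1; ...; xn]. *)
Definition mchain (x y : pel) (u : seq pel) : bool :=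
  path covers x u && (last x u == y).

Definition maxchain (c : seq pel) : bool := mchain pA pZ c.

(* The word in M of a chain x::u: read bottom-to-top, the word is read right to left. *)
Definition chain_word (x : pel) (u : seq pel) : word :=
  rev (pmap id (pairmap edge x u)).

Section Labelling.
Context {d : Order.disp_t} {L : porderType d}.

(* A labelling assigns to a maximal chain c of Pi (tail from A) and an edge index
   i (edge from the i-th to the (i+1)-th element of A::c) a label in L. *)
Definition chain_edge_labelling (lam : seq pel -> nat -> L) : Prop :=
  forall c1 c2 k, maxchain c1 -> maxchain c2 -> take k c1 = take k c2 ->
    forall i, i < k -> lam c1 i = lam c2 i.

(* Labels of a maximal chain u of the rooted interval [x,y]_r, where r = A::rs is a
   maximal chain of [A,x]; w is a completion of y to the top, irrelevant for a
   chain-edge labelling. *)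
Definition labs (lam : seq pel -> nat -> L) (rs u w : seq pel) : seq L :=
  [seq lam (rs ++ u ++ w) (size rs + i) | i <- iota 0 (size u)].

Definition increasing (s : seq L) : bool := sorted (fun a b => (a < b)%O) s.

Fixpoint lexlt (s t : seq L) : bool :=
  match s, t with
  | [::], [::] => false
  | [::], _ :: _ => true
  | _ :: _, [::] => false
  | a :: s', b :: t' => (a < b)%O || ((a == b) && lexlt s' t')
  end.

(* Rooted intervals [x,y]_r : x <= y (some maximal chain u of [x,y] exists),
   r = A::rs maximal chain of [A,x], w : completion of y to Z. *)
Definition CL_labelling (lam : seq pel -> nat -> L) : Prop :=
  chain_edge_labelling lam /\
  forall x y rs w, mchain pA x rs -> mchain y pZ w ->
    (exists u, mchain x y u) ->
    exists u0, [/\ mchain x y u0, increasing (labs lam rs u0 w),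
      (forall u, mchain x y u -> increasing (labs lam rs u w) -> u = u0) &
      (forall u, mchain x y u -> u <> u0 ->
         lexlt (labs lam rs u0 w) (labs lam rs u w))].

Definition minimal_chains_PBW (lam : seq pel -> nat -> L) : Prop :=
  forall x y rs w u, mchain pA x rs -> mchain y pZ w -> mchain x y u ->
    (forall u', mchain x y u' -> u' <> u ->
       lexlt (labs lam rs u w) (labs lam rs u' w)) ->
    normal_form (chain_word x u).

End Labelling.

From HB Require Import structures.
From mathcomp Require Import all_boot all_order.
Import Order.TTheory.

(* In each of the three diamonds [A,W], [A,X] and [U,Z]_(A<U) exactly one maximal
   chain has a normal-form word (fb, ic and kh respectively), so it must be the
   CL-minimal chain. Writing s, u for the labels of A<S and A<U, the first two
   diamonds force s = u together with f < h on S<W, U<W and i < g on U<X, S<X;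
   the third forces h <= i. Then s < f < h <= i < g, so the chain A<S<X of [A,X]
   is increasing as well, contradicting uniqueness of the increasing chain. *)

Section Lexicographic.
Context {disp : Order.disp_t} {L : porderType disp}.

Lemma increasing2 (a b : L) : increasing [:: a; b] = (a < b)%O.
Proof. by rewrite /increasing /= andbT. Qed.

Lemma lexlt1 (a b : L) : lexlt [:: a] [:: b] = (a < b)%O.
Proof. by rewrite /= andbF orbF. Qed.

Lemma lexlt_cons_le {a b : L} {s t} : lexlt (a :: s) (b :: t) -> (a <= b)%O.
Proof. by case/orP=> [/ltW|/andP[/eqP-> _]]. Qed.

Lemma lexlt_cons_cross {a b : L} {s t s' t'} :
  lexlt (a :: s) (b :: t) -> lexlt (b :: t') (a :: s') ->
  [/\ a = b, lexlt s t & lexlt t' s'].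
Proof.
case/orP=> [ab|/andP[/eqP<- st]] /orP[ba|/andP[/eqP ba ts]].
- by have := lt_trans ab ba; rewrite ltxx.
- by move: ab; rewrite ba ltxx.
- by move: ba; rewrite ltxx.
- by [].
Qed.

End Lexicographic.

Lemma labs2 {disp : Order.disp_t} {L : porderType disp} (lam : seq pel -> nat -> L)
    rs x1 x2 w :
  labs lam rs [:: x1; x2] w =
    [:: lam (rs ++ [:: x1, x2 & w]) (size rs); lam (rs ++ [:: x1, x2 & w]) (size rs).+1].
Proof. by rewrite /labs /= addn0 addn1. Qed.

Section PBWChains.
Context {disp : Order.disp_t} {L : porderType disp} (lam : seq pel -> nat -> L).
Hypotheses (lamCL : CL_labelling lam) (lamPBW : minimal_chains_PBW lam).

Lemma PBW_chain_CL_min x y rs w u1 :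
  mchain pA x rs -> mchain y pZ w ->
  (forall u, mchain x y u -> u <> u1 -> ~~ normal_form (chain_word x u)) ->
  mchain x y u1 ->
  [/\ increasing (labs lam rs u1 w),
      (forall u, mchain x y u -> u <> u1 ->
         lexlt (labs lam rs u1 w) (labs lam rs u w)) &
      (forall u, mchain x y u -> increasing (labs lam rs u w) -> u = u1)].
Proof.
move=> rsP wP nonPBW u1P.
have [u0 [u0P inc0 uniq0 min0]] := lamCL.2 x y rs w rsP wP (ex_intro _ u1 u1P).
have u0E : u0 = u1.
  case: (u0 =P u1) => // u0u1.
  by have := nonPBW u0 u0P u0u1; rewrite (lamPBW _ _ _ _ _ rsP wP u0P min0).
by subst u0; split.
Qed.

End PBWChains.

Arguments PBW_chain_CL_min {disp L lam} lamCL lamPBW x y rs w {u1}.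

(* Pi has rank 3, so a saturated chain has at most three steps. *)
Ltac enum_chains :=
  case=> [|x1 [|x2 [|x3 [|x4 u]]]];
  repeat match goal with x : pel |- _ => case: x end;
  by rewrite /mchain //= ?andbF.

Lemma nonPBW_chains_AW u :
  mchain pA pW u -> u <> [:: pS; pW] -> ~~ normal_form (chain_word pA u).
Proof. by move: u; enum_chains. Qed.

Lemma nonPBW_chains_AX u :
  mchain pA pX u -> u <> [:: pU; pX] -> ~~ normal_form (chain_word pA u).
Proof. by move: u; enum_chains. Qed.

Lemma nonPBW_chains_UZ u :
  mchain pU pZ u -> u <> [:: pW; pZ] -> ~~ normal_form (chain_word pU u).
Proof. by move: u; enum_chains. Qed.

Theorem mainTheorem10 (d : Order.disp_t) (L : porderType d)
    (lam : seq pel -> nat -> L) :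
  ~ (CL_labelling lam /\ minimal_chains_PBW lam).
Proof.
move=> [lamCL lamPBW].
have [incASW minASW _] := PBW_chain_CL_min lamCL lamPBW pA pW [::] [:: pZ]
  isT isT nonPBW_chains_AW isT.
have [_ minAUX uniqAUX] := PBW_chain_CL_min lamCL lamPBW pA pX [::] [:: pZ]
  isT isT nonPBW_chains_AX isT.
have [_ minUWZ _] := PBW_chain_CL_min lamCL lamPBW pU pZ [:: pU] [::]
  isT isT nonPBW_chains_UZ isT.
have labAS := lamCL.1 [:: pS; pW; pZ] [:: pS; pX; pZ] 1 isT isT erefl 0 isT.
have labAU := lamCL.1 [:: pU; pW; pZ] [:: pU; pX; pZ] 1 isT isT erefl 0 isT.
have ltASW := minASW [:: pU; pW] isT ltac:(by []).
have ltAUX := minAUX [:: pS; pX] isT ltac:(by []).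
have ltUWZ := minUWZ [:: pX; pZ] isT ltac:(by []).
rewrite !labs2 -labAS -labAU !increasing2 in incASW ltASW ltAUX ltUWZ.
have [_ fh ig] := lexlt_cons_cross ltASW ltAUX.
have hi := lexlt_cons_le ltUWZ.
rewrite !lexlt1 in fh ig.
suff incASX : increasing (labs lam [::] [:: pS; pX] [:: pZ]).
  by have [] := uniqAUX [:: pS; pX] isT incASX.
rewrite labs2 -labAS increasing2.
exact: lt_trans incASW (lt_trans (lt_le_trans fh hi) ig).
Qed.
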